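(* Let $n\ge1$, $1\le q,q_1,q_2\le\infty$ and $s,s_1,s_2\in\mathbb{R}$. If $L(q_1,s_1)\ast L(q_2,s_2)\subset L(q,s)$, then $1+\frac1q\ge\frac1{q_1}+\frac1{q_2}$.
   Context: $\langle x\rangle=(1+|x|^2)^{1/2}$. For $1\le p\le\infty$, $s\in\mathbb{R}$, $L(p,s)$ is the space of measurable $f$ on $\mathbb{R}^n$ with $\|f\|_{L(p,s)}=\big(\int|f(x)|^p\langle x\rangle^{ps}dx\big)^{1/p}<\infty$ (ess sup of $|f(x)|\langle x\rangle^s$ if $p=\infty$). Convolution $(f\ast g)(x)=\int f(x-y)g(y)dy$. ''$X\ast Y\subset Z$'' means there is $C$ with $f\ast g\in Z$ and $\|f\ast g\|_Z\le C\|f\|_X\|g\|_Y$ for all $f\in X$, $g\in Y$. Convention $1/\infty=0$. *)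

From HB Require Import structures.
From mathcomp Require Import all_boot all_order all_algebra.
From mathcomp Require Import all_classical all_reals all_analysis.
Set Implicit Arguments. Unset Strict Implicit. Unset Printing Implicit Defensive.
Import Order.TTheory GRing.Theory Num.Theory.
Import numFieldNormedType.Exports.
Local Open Scope classical_set_scope.
Local Open Scope ring_scope.

(* R^n is represented by n.-tuple R, with its canonical product
   sigma-algebra (measure_tuple_display), i.e. the Borel sets of R^n. *)

Section weighted_Lp.
Variable R : realType.

(* Lebesgue integral over R^n of a nonnegative extended-real function,
   computed as the iterated one-dimensional Lebesgue integral (Tonelli). *)
Fixpoint iint (n : nat) : (n.-tuple R -> \bar R) -> \bar R :=
  match n return (n.-tuple R -> \bar R) -> \bar R with
  | 0 => fun f => f [tuple]
  | m.+1 => fun f =>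
      (\int[@lebesgue_measure R]_x iint (fun t => f (cons_tuple x t)))%E
  end.

Definition lebn (n : nat) (A : set (n.-tuple R)) : \bar R :=
  iint (fun x => (\1_A x)%:E).

Definition ae_n (n : nat) (P : n.-tuple R -> Prop) : Prop :=
  exists N : set (n.-tuple R), measurable N /\ lebn N = 0%E /\
    forall x, ~ N x -> P x.

Definition intn (n : nat) (h : n.-tuple R -> R) : R :=
  fine (iint (fun y => (Num.max (h y) 0)%:E) -
        iint (fun y => (Num.max (- h y) 0)%:E))%E.

Definition jbr (n : nat) (x : n.-tuple R) : R :=
  Num.sqrt (1 + \sum_(i < n) (tnth x i) ^+ 2).

Definition tsub (n : nat) (x y : n.-tuple R) : n.-tuple R :=
  [tuple tnth x i - tnth y i | i < n].

Definition Lnorm_w (n : nat) (p : \bar R) (s : R) (f : n.-tuple R -> R)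
  : \bar R :=
  match p with
  | r%:E => ((iint (fun x => (`|f x| `^ r * jbr x `^ (r * s))%:E)) `^ r^-1)%E
  | +oo%E => ereal_inf [set M%:E | M in
               [set M : R | 0 <= M /\ ae_n (fun x => `|f x| * jbr x `^ s <= M)]]
  | -oo%E => +oo%E
  end.

Definition inL (n : nat) (p : \bar R) (s : R) (f : n.-tuple R -> R) : Prop :=
  measurable_fun setT f /\ (Lnorm_w p s f < +oo)%E.

Definition conv_defined (n : nat) (f g : n.-tuple R -> R) : Prop :=
  ae_n (fun x => (iint (fun y => (`|f (tsub x y) * g y|)%:E) < +oo)%E).

Definition conv (n : nat) (f g : n.-tuple R -> R) : n.-tuple R -> R :=
  fun x => intn (fun y => f (tsub x y) * g y).

Definition conv_incl (n : nat) (p1 : \bar R) (s1 : R) (p2 : \bar R) (s2 : R)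
  (p : \bar R) (s : R) : Prop :=
  exists C : R, forall f g : n.-tuple R -> R,
    inL p1 s1 f -> inL p2 s2 g ->
    conv_defined f g /\ inL p s (conv f g) /\
    (Lnorm_w p s (conv f g) <= C%:E * Lnorm_w p1 s1 f * Lnorm_w p2 s2 g)%E.

Definition invex (p : \bar R) : R :=
  match p with r%:E => r^-1 | _ => 0 end.

End weighted_Lp.

From Pilot Require Import Defs.
From HB Require Import structures.
From mathcomp Require Import all_boot all_order all_algebra.
From mathcomp Require Import all_classical all_reals all_analysis.
From mathcomp Require Import measurable_realfun lra.
Import Order.TTheory GRing.Theory Num.Theory.
Import numFieldNormedType.Exports.
Local Open Scope classical_set_scope.
Local Open Scope ring_scope.
Set Implicit Arguments. Unset Strict Implicit. Unset Printing Implicit Defensive.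

(* Test the inclusion on the indicators f_a of the cubes [0,a]^n as a -> 0.
   On [0,1]^n the weight <x> lies between 1 and sqrt(1 + n), so
   ||f_a||_{L(p,s)} <= k a^(n/p), while (f_a * f_a)(x) >= (a/2)^n on
   [a/2,a]^n gives ||f_a * f_a||_{L(q,s)} >= c a^(n(1 + 1/q)).  The inclusion
   thus yields c a^(n(1 + 1/q)) <= C' a^(n(1/q1 + 1/q2)) for all small a,
   which forces n(1/q1 + 1/q2) <= n(1 + 1/q). *)

Section real_powers.
Variable R : realType.

Lemma ge1_powR_bounds (w K t : R) : 1 <= w -> w <= K ->
  K `^ (- `|t|) <= w `^ t <= K `^ `|t|.
Proof.
move=> w1 wK.
have w0 : 0 < w by apply: lt_le_trans w1; exact: ltr01.
have lw : 0 <= ln w by apply: ln_ge0.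
have lK : ln w <= ln K by rewrite ler_ln // posrE (lt_le_trans w0).
have t1 : t <= `|t| by apply: ler_norm.
have t2 : - `|t| <= t by rewrite lerNl -normrN ler_norm.
rewrite /powR !gt_eqF ?(lt_le_trans w0) // !ler_expR; apply/andP; split; nra.
Qed.

Lemma powR_weighted (y w r s : R) : 0 <= y ->
  y `^ r * w `^ (r * s) = (y * w `^ s) `^ r.
Proof. by move=> y0; rewrite powRM ?powR_ge0 // -powRrM (mulrC s). Qed.

Lemma powR_root_mul (u v r : R) (n : nat) : 0 < r -> 0 <= u -> 0 <= v ->
  (u `^ r * v ^+ n) `^ r^-1 = u * v `^ (n%:R * r^-1).
Proof.
move=> r0 u0 v0.
rewrite powRM ?powR_ge0 ?exprn_ge0 // -powRrM mulfV ?gt_eqF // powRr1 //.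
by rewrite -powR_mulrn // -powRrM.
Qed.

(* If [c0 a^e1 <= c1 a^e2] for all small [a] with [e1 < e2], choosing [a] with
   [a^(e2 - e1) <= c0 / (2 (c1 + 1))] gives [c0 <= c0 / 2]. *)
Lemma exponent_le_of_powR_bound (c0 c1 e1 e2 : R) : 0 < c0 -> 0 <= c1 ->
  (forall a, 0 < a -> a <= 1 -> c0 * a `^ e1 <= c1 * a `^ e2) -> e2 <= e1.
Proof.
move=> c0_gt0 c1_ge0 bound; rewrite leNgt; apply/negP => e12.
have d_gt0 : 0 < e2 - e1 by rewrite subr_gt0.
pose m := Num.min 1 (c0 / (2 * (c1 + 1))).
have m_gt0 : 0 < m by rewrite lt_min ltr01 divr_gt0 // mulr_gt0 // ltr_wpDl.
have m_le1 : m <= 1 by rewrite ge_min lexx.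
have c1m : c1 * m * 2 < c0.
  have : m * (2 * (c1 + 1)) <= c0.
    by rewrite -ler_pdivlMr ?ge_min ?lexx ?orbT // mulr_gt0 // ltr_wpDl.
  nra.
pose a := m `^ (e2 - e1)^-1.
have a_gt0 : 0 < a by apply: powR_gt0.
have a_le1 : a <= 1.
  rewrite /a -(powRr0 m); apply: ger_powR; first by rewrite m_gt0 m_le1.
  by rewrite invr_ge0 ltW.
have ae2 : a `^ e2 = m * a `^ e1.
  rewrite -[e2](subrK e1) powRD; last by apply/implyP => _; rewrite gt_eqF.
  by rewrite /a -powRrM mulVf ?gt_eqF // powRr1 // ltW.
have := bound a a_gt0 a_le1; rewrite ae2 mulrA ler_pM2r ?powR_gt0 //.
nra.
Qed.

End real_powers.

Section cubes.
Variable R : realType.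
Local Open Scope ereal_scope.

Lemma lee_mul_bound (C : R) (x y : \bar R) (B1 B2 : R) :
  0 <= x -> x <= B1%:E -> 0 <= y -> y <= B2%:E ->
  C%:E * x * y <= (`|C| * B1 * B2)%:E.
Proof.
move=> x0 xB y0 yB.
have fx : x \is a fin_num by rewrite ge0_fin_numE // (le_lt_trans xB) ?ltry.
have fy : y \is a fin_num by rewrite ge0_fin_numE // (le_lt_trans yB) ?ltry.
have x_ge0 := fine_ge0 x0; have y_ge0 := fine_ge0 y0.
have {}xB : (fine x <= B1)%R by rewrite -lee_fin fineK.
have {}yB : (fine y <= B2)%R by rewrite -lee_fin fineK.
rewrite -(fineK fx) -(fineK fy) -!EFinM lee_fin -!mulrA.
apply: le_trans (ler_wpM2r (mulr_ge0 x_ge0 y_ge0) (ler_norm C)) _.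
by rewrite ler_wpM2l // ler_pM.
Qed.

(* No measurability is needed: for a nonnegative integrand the integral is the
   supremum of the integrals of the simple functions below it. *)
Lemma ge0_le_integralT (f g : R -> \bar R) :
  (forall x, 0 <= f x) -> (forall x, f x <= g x) ->
  \int[@lebesgue_measure R]_x f x <= \int[@lebesgue_measure R]_x g x.
Proof.
move=> f0 fg.
have g0 x : 0 <= g x by exact: le_trans (f0 x) (fg x).
rewrite !ge0_integralTE //; apply: ereal_sup_le => _ [h /= hf <-].
by exists h => //= x; exact: le_trans (hf x) (fg x).
Qed.

Lemma iint_ge0 n (f : n.-tuple R -> \bar R) : (forall x, 0 <= f x) -> 0 <= iint f.
Proof.
elim: n f => [|n IH] f f0 /=; first exact: f0.
by apply: integral_ge0 => x _; apply: IH.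
Qed.

Lemma le_iint n (f g : n.-tuple R -> \bar R) :
  (forall x, 0 <= f x) -> (forall x, f x <= g x) -> iint f <= iint g.
Proof.
elim: n f g => [|n IH] f g f0 fg /=; first exact: fg.
by apply: ge0_le_integralT => x; [apply: iint_ge0 | apply: IH].
Qed.

Lemma iint0 n : iint (fun _ : n.-tuple R => 0) = 0.
Proof. by elim: n => //= n IH; under eq_fun do rewrite IH; exact: integral0. Qed.

Definition in_cube (a b : R) (x : seq R) : bool := all (fun y => a <= y <= b)%R x.

Definition cube n (a b : R) : set (n.-tuple R) := [set x | in_cube a b x].
Arguments cube : clear implicits.

Lemma in_cube_sub (a b a' b' : R) (x : seq R) : (a' <= a)%R -> (b <= b')%R ->
  in_cube a b x -> in_cube a' b' x.
Proof.
move=> aa' bb'; elim: x => //= y x IH /andP[/andP[ay yb] hx].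
by rewrite IH // andbT (le_trans aa' ay) (le_trans yb bb').
Qed.

Lemma in_cube_tsub n (a1 b1 a2 b2 : R) (x y : n.-tuple R) :
  in_cube a1 b1 x -> in_cube a2 b2 y -> in_cube (a1 - b2) (b1 - a2) (tsub x y).
Proof.
move=> /all_tnthP hx /all_tnthP hy; apply/all_tnthP => i; rewrite tnth_mktuple.
have /andP[? ?] := hx i; have /andP[? ?] := hy i.
by rewrite lerB // lerB.
Qed.

Lemma measurable_cube n (a b : R) : measurable (cube n a b).
Proof.
have -> : cube n a b =
    \bigcap_(i in [set: 'I_n]) ((fun x => tnth x i) @^-1` `[a, b]%classic).
  apply/seteqP; split => x /=.
    by move=> /all_tnthP hx i _ /=; rewrite in_itv; exact: hx i.
  by move=> hx; apply/all_tnthP => i; have := hx i I; rewrite /= in_itv.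
apply: fin_bigcap_measurable; first exact: finite_finset.
move=> i _; rewrite -[X in measurable X]setTI.
by apply: measurable_tnth => //; exact: measurable_itv.
Qed.

Lemma indic_cube n (a b : R) (x : n.-tuple R) :
  \1_(cube n a b) x = (if in_cube a b x then 1 else 0 : R)%R.
Proof.
rewrite indicE; have -> : (x \in cube n a b) = in_cube a b x.
  by apply/idP/idP; rewrite inE.
by case: in_cube.
Qed.

Lemma integral_itv_cst (a b k : R) : (a < b)%R -> (0 <= k)%R ->
  \int[@lebesgue_measure R]_x ((if a <= x <= b then k else 0)%R)%:E =
  (k * (b - a))%:E.
Proof.
move=> ab k0.
have -> : (fun x => ((if a <= x <= b then k else 0)%R)%:E) =
    (fun x => k%:E * (\1_(`[a, b] : set R) x)%:E).
  apply/funext => x; rewrite indicE (_ : (x \in _) = (a <= x <= b)%R); last first.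
    by rewrite mem_setE in_itv.
  by case: ifP => _ /=; rewrite (mule1, mule0).
rewrite ge0_integralZl_EFin //; last first.
  by apply/measurable_EFinP; exact: measurable_indic.
have := lebesgue_measure_itv `[a, b]; rewrite /= lte_fin ab -EFinB => itvE.
by rewrite integral_indic // setIT [X in _ * X = _]itvE -EFinM.
Qed.

Lemma iint_cube n (a b c : R) : (a < b)%R -> (0 <= c)%R ->
  iint (fun x : n.-tuple R => ((if in_cube a b x then c else 0)%R)%:E) =
  (c * (b - a) ^+ n)%:E.
Proof.
elim: n c => [|n IH] c ab c0 /=; first by rewrite expr0 mulr1.
have -> : (fun x : R => iint (fun t : n.-tuple R =>
      ((if in_cube a b (cons_tuple x t) then c else 0)%R)%:E)) =
    (fun x => ((if a <= x <= b then c * (b - a) ^+ n else 0)%R)%:E).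
  apply/funext => x; case: ifP => xab.
    by rewrite -IH //=; congr iint; apply/funext => t; rewrite /= xab.
  transitivity (iint (fun _ : n.-tuple R => 0)); last exact: iint0.
  by congr iint; apply/funext => t; rewrite /= xab.
rewrite integral_itv_cst //; last first.
  by rewrite mulr_ge0 // exprn_ge0 // subr_ge0 ltW.
by rewrite exprSr mulrA.
Qed.

Lemma lebn_cube n (a b : R) : (a < b)%R -> lebn (cube n a b) = ((b - a) ^+ n)%:E.
Proof.
move=> ab; rewrite /lebn.
under eq_fun do rewrite indic_cube.
by rewrite iint_cube // mul1r.
Qed.

Lemma le_lebn n (A B : set (n.-tuple R)) : A `<=` B -> lebn A <= lebn B.
Proof.
move=> AB; apply: le_iint => x; rewrite lee_fin !indicE ?ler0n // ler_nat.
by case: (boolP (x \in A)) => // /set_mem/AB/mem_set ->.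
Qed.

Lemma exists_in_cube_notin_null n (a b : R) (N : set (n.-tuple R)) :
  (a < b)%R -> lebn N = 0 ->
  exists x : n.-tuple R, in_cube a b x /\ ~ N x.
Proof.
move=> ab N0; apply: contrapT => /forallNP noN.
have : lebn (cube n a b) <= lebn N.
  by apply: le_lebn => x hx; apply: contrapT => Nx; apply: (noN x).
rewrite N0 lebn_cube // lee_fin leNgt => /negP; apply.
by rewrite exprn_gt0 // subr_gt0.
Qed.

Lemma jbr_ge1 n (x : n.-tuple R) : (1 <= jbr x)%R.
Proof.
have sum_ge0 : (0 <= \sum_(i < n) tnth x i ^+ 2 :> R)%R.
  by rewrite sumr_ge0 // => i _; rewrite sqr_ge0.
by rewrite /jbr -{1}sqrtr1 ler_sqrt ?addr_ge0 // lerDl.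
Qed.

Lemma jbr_le_unit_cube n (x : n.-tuple R) :
  in_cube 0 1 x -> (jbr x <= Num.sqrt (1 + n%:R))%R.
Proof.
move=> /all_tnthP x01; rewrite /jbr ler_sqrt ?addr_ge0 // lerD2l.
rewrite -[n in (_ <= n%:R)%R]card_ord -sumr_const ler_sum // => i _.
by have /andP[? ?] := x01 i; rewrite expr_le1.
Qed.

Lemma jbr_powR_bounds n (x : n.-tuple R) (t : R) : in_cube 0 1 x ->
  (Num.sqrt (1 + n%:R) `^ (- `|t|) <= jbr x `^ t <=
   Num.sqrt (1 + n%:R) `^ `|t|)%R.
Proof.
by move=> x01; apply: ge1_powR_bounds (jbr_ge1 x) (jbr_le_unit_cube x01).
Qed.

Lemma poweR_le_EFin (x : \bar R) (B r : R) :
  (0 <= r)%R -> 0 <= x -> x <= B%:E ->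
  x `^ r <= (B `^ r)%:E.
Proof.
move=> r0 x0 xB; rewrite -poweR_EFin; apply: gt0_ler_poweR => //.
  by rewrite in_itv /= x0 leey.
by rewrite in_itv /= leey (le_trans x0 xB).
Qed.

Lemma poweR_ge_EFin (x : \bar R) (B r : R) :
  (0 <= r)%R -> (0 <= B)%R -> B%:E <= x ->
  (B `^ r)%:E <= x `^ r.
Proof.
move=> r0 B0 Bx; rewrite -poweR_EFin; apply: gt0_ler_poweR => //.
  by rewrite in_itv /= lee_fin B0 leey.
by rewrite in_itv /= leey (le_trans _ Bx).
Qed.

Lemma Lnorm_w_ge0 n (p : \bar R) (s : R) (g : n.-tuple R -> R) :
  1 <= p -> 0 <= Lnorm_w p s g.
Proof.
case: p => [r| |] // _; first exact: poweR_ge0.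
by apply/ereal_infP => _ [M [M0 _] <-]; rewrite lee_fin.
Qed.

Lemma Lnorm_w_le_cube n (p : \bar R) (s : R) (g : n.-tuple R -> R) (a b u : R) :
  1 <= p -> (a < b)%R -> (0 <= u)%R ->
  (forall x, `|g x| * jbr x `^ s <= if in_cube a b x then u else 0)%R ->
  Lnorm_w p s g <= (u * (b - a) `^ (n%:R * invex p))%:E.
Proof.
case: p => [r| |] //; last first.
  move=> _ _ u0 gu; rewrite /= mulr0 powRr0 mulr1; apply: ereal_inf_lbound.
  exists u => //; split => //; exists set0; split => //; split.
    by rewrite /lebn; under eq_fun do rewrite indicE in_set0; exact: iint0.
  by move=> x _; apply: le_trans (gu x) _; case: ifP.
rewrite lee_fin => r1 ab u0 gu.
have r0 : (0 < r)%R by apply: lt_le_trans r1; exact: ltr01.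
rewrite /= -powR_root_mul ?subr_ge0 ?(ltW ab) //; apply: poweR_le_EFin.
- by rewrite invr_ge0 ltW.
- by apply: iint_ge0 => x; rewrite lee_fin mulr_ge0 ?powR_ge0.
rewrite -iint_cube ?powR_ge0 //; apply: le_iint => x.
  by rewrite lee_fin mulr_ge0 ?powR_ge0.
rewrite lee_fin powR_weighted //; move: (gu x); case: ifP => _ gxu.
  by apply: ge0_ler_powR; rewrite ?nnegrE ?mulr_ge0 ?powR_ge0 // ltW.
have -> : (`|g x| * jbr x `^ s = 0)%R.
  by apply/eqP; rewrite eq_le gxu mulr_ge0 ?powR_ge0.
by rewrite powR0 ?gt_eqF.
Qed.

Lemma Lnorm_w_ge_cube n (p : \bar R) (s : R) (g : n.-tuple R -> R) (a b l : R) :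
  1 <= p -> (a < b)%R -> (0 <= l)%R ->
  (forall x : n.-tuple R, in_cube a b x -> l <= `|g x| * jbr x `^ s)%R ->
  (l * (b - a) `^ (n%:R * invex p))%:E <= Lnorm_w p s g.
Proof.
case: p => [r| |] //; last first.
  move=> _ ab _ lg; rewrite /= mulr0 powRr0 mulr1.
  apply/ereal_infP => _ [M [_ [N [_ [N0 gM]]]] <-].
  have [x [xab Nx]] := exists_in_cube_notin_null ab N0.
  by rewrite lee_fin (le_trans (lg x xab) (gM x Nx)).
rewrite lee_fin => r1 ab l0 lg.
have r0 : (0 < r)%R by apply: lt_le_trans r1; exact: ltr01.
rewrite /= -powR_root_mul ?subr_ge0 ?(ltW ab) //; apply: poweR_ge_EFin.
- by rewrite invr_ge0 ltW.
- by rewrite mulr_ge0 ?powR_ge0 ?exprn_ge0 // subr_ge0 ltW.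
rewrite -iint_cube ?powR_ge0 //; apply: le_iint => x.
  by case: ifP; rewrite lee_fin ?powR_ge0.
rewrite lee_fin powR_weighted //; case: ifP => xab; last by rewrite powR_ge0.
by apply: ge0_ler_powR; rewrite ?nnegrE ?mulr_ge0 ?powR_ge0 ?lg // ltW.
Qed.

Definition cube_indic n (a : R) : n.-tuple R -> R := \1_(cube n 0 a).
Arguments cube_indic : clear implicits.

Lemma cube_indic_ge0 n (a : R) x : (0 <= cube_indic n a x)%R.
Proof. by rewrite /cube_indic indic_cube; case: ifP. Qed.

Lemma cube_indic_le1 n (a : R) x : (cube_indic n a x <= 1)%R.
Proof. by rewrite /cube_indic indic_cube; case: ifP. Qed.

Lemma cube_indic_Lnorm_le n (p : \bar R) (s : R) : 1 <= p ->
  exists2 k : R, (0 <= k)%R & forall a : R, (0 < a)%R -> (a <= 1)%R ->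
    inL p s (cube_indic n a) /\
    Lnorm_w p s (cube_indic n a) <= (k * a `^ (n%:R * invex p))%:E.
Proof.
move=> p1; exists (Num.sqrt (1 + n%:R) `^ `|s|)%R; first exact: powR_ge0.
move=> a a0 a1.
have le : Lnorm_w p s (cube_indic n a) <=
    (Num.sqrt (1 + n%:R) `^ `|s| * (a - 0) `^ (n%:R * invex p))%:E.
  apply: Lnorm_w_le_cube => // x.
  rewrite /cube_indic indic_cube; case: ifP => xa; last by rewrite normr0 mul0r.
  rewrite normr1 mul1r.
  by have /andP[] := jbr_powR_bounds s (in_cube_sub (lexx 0) a1 xa).
rewrite subr0 in le; split => //; split.
  by apply: measurable_indic; exact: measurable_cube.
by apply: le_lt_trans le _; exact: ltry.
Qed.

Lemma ge0_intnE n (h : n.-tuple R -> R) : (forall y, 0 <= h y)%R ->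
  intn h = fine (iint (fun y => (h y)%:E)).
Proof.
move=> h0; rewrite /intn.
have -> : (fun y => (Num.max (h y) 0)%:E) = (fun y => (h y)%:E).
  by apply/funext => y; rewrite max_l.
have -> : (fun y => (Num.max (- h y) 0)%:E) = (fun _ => 0).
  by apply/funext => y; rewrite max_r // oppr_le0.
by rewrite iint0 sube0.
Qed.

Lemma conv_cube_indic_ge n (a : R) (x : n.-tuple R) : (0 < a)%R ->
  in_cube (a / 2) a x ->
  ((a / 2) ^+ n <= Defs.conv (cube_indic n a) (cube_indic n a) x)%R.
Proof.
move=> a0 xa.
pose h (y : n.-tuple R) : R := (cube_indic n a (tsub x y) * cube_indic n a y)%R.
have h_ge0 y : (0 <= h y)%R by rewrite mulr_ge0 ?cube_indic_ge0.
have lo : ((a / 2) ^+ n)%:E <= iint (fun y => (h y)%:E).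
  have := @iint_cube n 0 (a / 2) 1; rewrite mul1r subr0 => <- //; last first.
    by rewrite divr_gt0.
  apply: le_iint => y; first by case: ifP.
  rewrite lee_fin; case: ifP => ya //.
  have := in_cube_tsub xa ya; rewrite subrr subr0 => xya.
  have ya' : in_cube 0 a y by apply: in_cube_sub ya => //; lra.
  by rewrite /h /cube_indic !indic_cube xya ya' mulr1.
have up : iint (fun y => (h y)%:E) <= (a ^+ n)%:E.
  have := @iint_cube n 0 a 1; rewrite mul1r subr0 => <- //.
  apply: le_iint => y; first by rewrite lee_fin.
  rewrite lee_fin /h {2}/cube_indic indic_cube.
  by case: ifP => _; rewrite ?mulr0 // mulr1 cube_indic_le1.
have fin : iint (fun y => (h y)%:E) \is a fin_num.
  rewrite ge0_fin_numE ?(le_lt_trans up) ?ltry //.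
  by rewrite (le_trans _ lo) // lee_fin exprn_ge0 // divr_ge0 // ltW.
by rewrite /Defs.conv ge0_intnE // -lee_fin fineK.
Qed.

Lemma conv_cube_indic_Lnorm_ge n (p : \bar R) (s : R) : 1 <= p ->
  exists2 c : R, (0 < c)%R & forall a : R, (0 < a)%R -> (a <= 1)%R ->
    (c * a `^ (n%:R * (1 + invex p)))%:E <=
    Lnorm_w p s (Defs.conv (cube_indic n a) (cube_indic n a)).
Proof.
move=> p1; pose e := (n%:R * (1 + invex p))%R.
pose K : R := Num.sqrt (1 + n%:R)%R.
have K_gt0 : (0 < K)%R by rewrite sqrtr_gt0 ltr_wpDr.
exists (K `^ (- `|s|) * 2^-1 `^ e)%R; first by rewrite mulr_gt0 ?powR_gt0.
move=> a a0 a1; have a2_ge0 : (0 <= a / 2)%R by rewrite divr_ge0 // ltW.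
pose l := ((a / 2) ^+ n * K `^ (- `|s|))%R.
apply: le_trans (@Lnorm_w_ge_cube n p s _ (a / 2) a l p1 _ _ _).
- rewrite lee_fin (_ : a - a / 2 = a / 2)%R; last by lra.
  rewrite [leRHS]mulrAC -powR_mulrn // -powRD; last first.
    by apply/implyP => _; rewrite gt_eqF ?divr_gt0.
  rewrite (_ : n%:R + _ = e)%R; last by rewrite /e mulrDr mulr1.
  rewrite (powRM _ (ltW a0)) ?invr_ge0 // -/e.
  by rewrite mulrC (mulrC (K `^ _)%R) mulrA.
- by lra.
- by rewrite mulr_ge0 ?exprn_ge0 ?powR_ge0.
move=> x xa; apply: ler_pM; rewrite ?exprn_ge0 ?powR_ge0 //.
  by apply: le_trans (conv_cube_indic_ge a0 xa) _; exact: ler_norm.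
have x01 : in_cube 0 1 x by apply: in_cube_sub xa => //; lra.
by have /andP[] := jbr_powR_bounds s x01.
Qed.

End cubes.
Arguments cube_indic {R} n a.

Theorem proposition4p2 (R : realType) (n : nat) (hn : (1 <= n)%N)
    (q q1 q2 : \bar R) (s s1 s2 : R)
    (hq : (1%:E <= q)%E) (hq1 : (1%:E <= q1)%E) (hq2 : (1%:E <= q2)%E) :
  conv_incl n q1 s1 q2 s2 q s ->
  invex q1 + invex q2 <= 1 + invex q.
Proof.
move=> [C conv_le].
have [k1 k1_ge0 norm1] := cube_indic_Lnorm_le n s1 hq1.
have [k2 k2_ge0 norm2] := cube_indic_Lnorm_le n s2 hq2.
have [c c_gt0 norm_conv] := conv_cube_indic_Lnorm_ge n s hq.
rewrite -(ler_pM2l (_ : 0 < n%:R :> R)) ?ltr0n //.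
apply: (@exponent_le_of_powR_bound _ c (`|C| * k1 * k2)) => // [|a a0 a1].
  by rewrite !mulr_ge0.
have [in1 le1] := norm1 a a0 a1; have [in2 le2] := norm2 a a0 a1.
have [_ [_ leC]] := conv_le _ _ in1 in2.
have := le_trans (norm_conv a a0 a1) (le_trans leC
  (lee_mul_bound C (Lnorm_w_ge0 _ _ hq1) le1 (Lnorm_w_ge0 _ _ hq2) le2)).
rewrite lee_fin => /le_trans; apply.
rewrite mulrDr powRD; last by apply/implyP => _; rewrite gt_eqF.
by rewrite !mulrA (mulrAC _ (a `^ _) k2).
Qed.
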